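(* Let $\lambda_1,\lambda_2$ be two distinct lines in $\mathbb{R}^2$ given by $\Lambda_i=0$, where $\Lambda_i=\alpha_i x+\beta_i y+\gamma_i$ with real coefficients and with $\alpha_i\neq0$ and $\beta_i\neq0$ for $i=1,2$. Then the bivariate cubic polynomial $f(x,y)=xy\Lambda_1+\Lambda_2$ is irreducible. *)

From HB Require Import structures.
From mathcomp Require Import all_boot all_order all_algebra.
From mathcomp Require Import mpoly.
Set Implicit Arguments. Unset Strict Implicit. Unset Printing Implicit Defensive.
Import Order.TTheory GRing.Theory Num.Theory.
Local Open Scope ring_scope.

Definition irreducible_elt (D : idomainType) (p : D) : Prop :=
  p != 0 /\ ~~ (p \is a GRing.unit) /\
  (forall q r : D, p = q * r -> (q \is a GRing.unit) \/ (r \is a GRing.unit)).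

Definition linform (R : nzRingType) (a b c : R) : {mpoly R[2]} :=
  a *: 'X_0 + b *: 'X_1 + c%:MP.

(* If f = x y L1 + L2 (total degree 3) factored into two non-units, degrees
   add, so one factor is affine and f vanishes on the line u x + v y + w = 0
   it cuts out.  Restricting f to that line gives a polynomial identity of
   degree at most 3 in the line parameter; its four coefficients vanish,
   which for a vertical or horizontal line contradicts [b2 <> 0] or
   [a2 <> 0] respectively, and for a slanted line forces L1 and L2 to be
   multiples of its equation, i.e. the two lines coincide. *)
From HB Require Import structures.
From mathcomp Require Import all_boot all_order all_algebra.
From mathcomp Require Import mpoly.
From mathcomp Require Import zify ring lra.
Import Order.TTheory GRing.Theory Num.Theory.
Local Open Scope ring_scope.
Set Implicit Arguments. Unset Strict Implicit. Unset Printing Implicit Defensive.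

Lemma cubic_identity_coef0 (R : realFieldType) (A B C D : R) :
  (forall t, A * (t * t * t) + B * (t * t) + C * t + D = 0) ->
  [/\ A = 0, B = 0, C = 0 & D = 0].
Proof. by move=> H; have := H 0; have := H 1; have := H (-1); have := H 2; split; lra. Qed.

Lemma msize1_unit (n : nat) (R : fieldType) (p : {mpoly R[n]}) :
  msize p = 1%N -> p \is a GRing.unit.
Proof.
move=> /eqP/msize_poly1P [c c_neq0 ->]; apply/unitrP; exists c^-1%:MP.
by rewrite -!mpolyCM mulVf ?mulfV.
Qed.

Lemma msize_unit (n : nat) (R : idomainType) (p : {mpoly R[n]}) :
  p \is a GRing.unit -> (msize p <= 1)%N.
Proof.
move=> /unitrP [q [qp _]]; have /andP [/eqP -> _] := mpoly_intro_unit qp.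
by rewrite msizeC leq_b1.
Qed.

Lemma irreducible_elt_of_no_affine_factor (n : nat) (R : fieldType)
    (p : {mpoly R[n]}) :
  (1 < msize p <= 4)%N -> (forall q r, msize q = 2%N -> p != q * r) ->
  irreducible_elt p.
Proof.
move=> /andP [size_gt1 size_le4] no_affine.
have p_neq0 : p != 0 by rewrite -msize_poly_eq0; lia.
split=> //; split; first by apply/negP => /msize_unit/(leq_trans size_gt1).
move=> q r pqr.
have q_neq0 : q != 0 by apply: contraNneq p_neq0 => q0; rewrite pqr q0 mul0r.
have r_neq0 : r != 0 by apply: contraNneq p_neq0 => r0; rewrite pqr r0 mulr0.
have [q1|q_gt1] := eqVneq (msize q) 1%N; first by left; apply: msize1_unit.
have [r1|r_gt1] := eqVneq (msize r) 1%N; first by right; apply: msize1_unit.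
have q_size_neq0 : msize q != 0%N by rewrite msize_poly_eq0.
have r_size_neq0 : msize r != 0%N by rewrite msize_poly_eq0.
move: size_le4; rewrite pqr msizeM // => size_le4.
have [q2|r2] : msize q = 2%N \/ msize r = 2%N by lia.
  by move: (no_affine q r q2); rewrite pqr eqxx.
by move: (no_affine r q r2); rewrite pqr mulrC eqxx.
Qed.

Lemma msize2_linform (R : fieldType) (q : {mpoly R[2]}) : msize q = 2%N ->
  exists u v w : R, ((u != 0) || (v != 0)) /\ q = linform u v w.
Proof.
move=> size_q.
exists q@_(mnm1 (0 : 'I_2)), q@_(mnm1 (1 : 'I_2)), q@_0%MM.
have qE : q = linform q@_(mnm1 (0 : 'I_2)) q@_(mnm1 (1 : 'I_2)) q@_0%MM.
  apply/mpolyP => m; rewrite !mcoeffD !mcoeffZ !mcoeffX mcoeffC.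
  have [m_le1|m_ge2] := ltnP (mdeg m) 2.
    have [/eqP|m_neq0] := eqVneq (mdeg m) 0%N.
      by rewrite mdeg_eq0 => /eqP ->; rewrite !mnm1_eq0 !mulr0 !add0r eqxx mulr1.
    have /mdeg1P [[[|[|k]] ik] /eqP ->] : mdeg m == 1%N by lia.
    - have -> : Ordinal ik = 0 by apply/val_inj.
      by rewrite eqxx mnm1_eq0 eq_mnm1 /= !mulr0 mulr1 !addr0.
    - have -> : Ordinal ik = 1 by apply/val_inj.
      by rewrite eqxx mnm1_eq0 eq_mnm1 /= !mulr0 mulr1 addr0 add0r.
    - by [].
  rewrite memN_msupp_eq0; last by apply: msize_mdeg_ge; rewrite size_q.
  have ne1 i : (mnm1 i == m) = false.
    by apply/negbTE/eqP => mE; move: m_ge2; rewrite -mE mdeg1.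
  have -> : (m == 0%MM) = false by apply/negbTE/eqP => mE; move: m_ge2; rewrite mE mdeg0.
  by rewrite !ne1 !mulr0 !addr0.
split=> //; rewrite -negb_and; apply/negP => /andP [/eqP u0 /eqP v0].
by move: size_q; rewrite qE u0 v0 /linform !scale0r !add0r msizeC; case: (_ != 0).
Qed.

Definition pt2 (R : Type) (x y : R) : 'I_2 -> R :=
  fun i => if val i == 0%N then x else y.

Lemma meval_linform (R : comNzRingType) (a b c x y : R) :
  (linform a b c).@[pt2 x y] = a * x + b * y + c.
Proof. by rewrite /linform !mevalD !mevalZ !mevalXU mevalC. Qed.

Lemma msize_linform_le (R : comNzRingType) (a b c : R) :
  (msize (linform a b c) <= 2)%N.
Proof.
have msizeZX (d : R) (i : 'I_2) : (msize (d *: 'X_i) <= 2)%N.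
  by apply: leq_trans (msizeZ_le _ _) _; rewrite msizeX mdeg1.
apply: leq_trans (msizeD_le _ _) _; rewrite geq_max msizeC (leq_trans (leq_b1 _)) // andbT.
by apply: leq_trans (msizeD_le _ _) _; rewrite geq_max !msizeZX.
Qed.

Section TwoLines.

Variables (R : realFieldType) (a1 b1 c1 a2 b2 c2 : R).
Hypotheses (a1_neq0 : a1 != 0) (b1_neq0 : b1 != 0).
Hypotheses (a2_neq0 : a2 != 0) (b2_neq0 : b2 != 0).
Hypothesis lines_neq :
  ~ (forall x y : R, (a1 * x + b1 * y + c1 = 0) <-> (a2 * x + b2 * y + c2 = 0)).

Definition cubic_fun (x y : R) : R :=
  x * y * (a1 * x + b1 * y + c1) + (a2 * x + b2 * y + c2).

Definition cubic_poly : {mpoly R[2]} :=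
  'X_0 * 'X_1 * linform a1 b1 c1 + linform a2 b2 c2.

Lemma meval_cubic_poly x y : cubic_poly.@[pt2 x y] = cubic_fun x y.
Proof. by rewrite /cubic_poly mevalD mevalM mevalM !meval_linform !mevalXU. Qed.

Lemma msize_cubic_poly : (1 < msize cubic_poly <= 4)%N.
Proof.
apply/andP; split.
  rewrite ltnNge; apply/negP => /msize1_polyC cubicE.
  have := meval_cubic_poly 1 0; have := meval_cubic_poly 0 0.
  rewrite cubicE !mevalC /cubic_fun => h0 h1.
  have a2_0 : a2 = 0 by lra.
  by move: a2_neq0; rewrite a2_0 eqxx.
apply: leq_trans (msizeD_le _ _) _; rewrite geq_max.
rewrite (leq_trans (msize_linform_le a2 b2 c2)) // andbT.
have [->|lin_neq0] := eqVneq (linform a1 b1 c1) 0; first by rewrite mulr0 msize0.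
have X_neq0 (i : 'I_2) : ('X_i : {mpoly R[2]}) != 0.
  by rewrite -msize_poly_eq0 msizeX mdeg1.
rewrite msizeM ?mulf_neq0 // msizeM // !msizeX !mdeg1.
by rewrite !addSn; apply: msize_linform_le.
Qed.

Lemma cubic_fun_vertical x0 : ~ (forall t, cubic_fun x0 t = 0).
Proof.
move=> vanish.
have /cubic_identity_coef0 [_ /eqP t2 /eqP t1 _] : forall t, 0 * (t * t * t)
    + x0 * b1 * (t * t) + (x0 * (a1 * x0 + c1) + b2) * t + (a2 * x0 + c2) = 0.
  by move=> t; rewrite -[RHS](vanish t) /cubic_fun; ring.
move: t2; rewrite mulf_eq0 (negPf b1_neq0) orbF => /eqP x0_0.
by move: t1; rewrite x0_0 mul0r add0r (negPf b2_neq0).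
Qed.

Lemma cubic_fun_graph s k : ~ (forall t, cubic_fun t (s * t + k) = 0).
Proof.
move=> vanish.
have /cubic_identity_coef0 [t3 t2 t1 t0] : forall t, s * (a1 + b1 * s) * (t * t * t)
    + (s * (b1 * k + c1) + k * (a1 + b1 * s)) * (t * t)
    + (k * (b1 * k + c1) + (a2 + b2 * s)) * t + (b2 * k + c2) = 0.
  by move=> t; rewrite -[RHS](vanish t) /cubic_fun; ring.
have [s0|s_neq0] := eqVneq s 0.
  move: t2 t1; rewrite s0 !(mul0r, mulr0, add0r, addr0) => /eqP.
  rewrite mulf_eq0 (negPf a1_neq0) orbF => /eqP ->.
  by rewrite mul0r add0r => /eqP; rewrite (negPf a2_neq0).
have p1_0 : a1 + b1 * s = 0.
  by move/eqP: t3; rewrite mulf_eq0 (negPf s_neq0) => /eqP.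
have q1_0 : b1 * k + c1 = 0.
  by move/eqP: t2; rewrite p1_0 mulr0 addr0 mulf_eq0 (negPf s_neq0) => /eqP.
have p2_0 : a2 + b2 * s = 0 by move: t1; rewrite q1_0 mulr0 add0r.
apply: lines_neq => x y.
have lineE a b c :
  a * x + b * y + c = b * (y - (s * x + k)) + (a + b * s) * x + (b * k + c).
  by ring.
rewrite (lineE a1) (lineE a2) p1_0 q1_0 p2_0 t0 !mul0r !addr0.
by split=> /eqP; rewrite mulf_eq0 ?(negPf b1_neq0) ?(negPf b2_neq0) /= => /eqP ->;
  rewrite mulr0.
Qed.

Lemma cubic_fun_line u v w : (u != 0) || (v != 0) ->
  ~ (forall x y, u * x + v * y + w = 0 -> cubic_fun x y = 0).
Proof.
move=> uv vanish; have [v0|v_neq0] := eqVneq v 0.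
  rewrite v0 eqxx orbF in uv.
  by apply: (@cubic_fun_vertical (- w / u)) => t; apply: vanish; rewrite v0; field.
by apply: (@cubic_fun_graph (- u / v) (- w / v)) => t; apply: vanish; field.
Qed.

Lemma cubic_poly_no_affine_factor q r : msize q = 2%N -> cubic_poly != q * r.
Proof.
move=> /msize2_linform [u [v [w [uv ->]]]]; apply/eqP => cubicE.
apply: (@cubic_fun_line u v w uv) => x y uvw.
by rewrite -meval_cubic_poly cubicE mevalM meval_linform uvw mul0r.
Qed.

End TwoLines.

Theorem lemma2 (R : realFieldType) (a1 b1 c1 a2 b2 c2 : R) :
  a1 != 0 -> b1 != 0 -> a2 != 0 -> b2 != 0 ->
  ~ (forall x y : R, (a1 * x + b1 * y + c1 = 0) <-> (a2 * x + b2 * y + c2 = 0)) ->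
  irreducible_elt ('X_0 * 'X_1 * linform a1 b1 c1 + linform a2 b2 c2 : {mpoly R[2]}).
Proof.
move=> a1_neq0 b1_neq0 a2_neq0 b2_neq0 lines_neq.
apply: irreducible_elt_of_no_affine_factor.
  exact: msize_cubic_poly.
exact: cubic_poly_no_affine_factor.
Qed.
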